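(* Let $X\in\mathcal C$. Then: (1) $\bot\in X$ (the single-leaf bunch); (2) for all bunches $\Delta,\Delta'$, if $\Delta\in X$ then $(\Delta\mathbin{;}\Delta')\in X$; (3) for every bunch $\Delta$, if $(\Delta\mathbin{;}\Delta)\in X$ then $\Delta\in X$; (4) for every bunch $\Delta$, $\Delta\in X$ if and only if $\lfloor\Delta\rfloor\in X$.
   Context: Formulas of BI: $\varphi,\psi ::= \top \mid \bot \mid \varphi\wedge\psi \mid \varphi\vee\psi \mid \varphi\to\psi \mid \mathsf{emp} \mid \varphi\ast\psi \mid \varphi -\!\!\ast\, \psi \mid a$, $a\in\mathrm{Atom}$. Bunches are finite binary trees whose leaves are formulas or empty bunches $\varnothing_m,\varnothing_a$ and whose internal nodes are labelled by the multiplicative comma ($\Delta_1\mathbin{,}\Delta_2$) or the additive semicolon ($\Delta_1\mathbin{;}\Delta_2$). A bunched context $\Delta(-)$ is a bunch with one leaf replaced by a hole; $\Delta(\Gamma)$ fills it with $\Gamma$. Bunch equivalence $\equiv$ is the least equivalence relation making $\mathbin{,}$ commutative, associative with unit $\varnothing_m$, $\mathbin{;}$ commutative, associative with unit $\varnothing_a$, and closed under contexts; $\mathrm{Bunch}$ is the set of bunches modulo $\equiv$. $\lfloor\Delta\rfloor$ is the formula obtained from $\Delta$ by replacing $\mathbin{,}$ by $\ast$, $\varnothing_m$ by $\mathsf{emp}$, $\mathbin{;}$ by $\wedge$, $\varnothing_a$ by $\top$. The cut-free BI sequent calculus ($\Delta\vdash_{\mathsf{cf}}\varphi$) has the rules: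 (ax) $a\vdash a$ for atoms $a$; (equiv) from $\Delta'\vdash\varphi$, $\Delta\equiv\Delta'$ infer $\Delta\vdash\varphi$; (W;) from $\Delta(\Delta_1)\vdash\varphi$ infer $\Delta(\Delta_1\mathbin{;}\Delta_2)\vdash\varphi$; (C;) from $\Delta(\Delta_1\mathbin{;}\Delta_1)\vdash\varphi$ infer $\Delta(\Delta_1)\vdash\varphi$; (empR) $\varnothing_m\vdash\mathsf{emp}$; (empL) from $\Delta(\varnothing_m)\vdash\varphi$ infer $\Delta(\mathsf{emp})\vdash\varphi$; ($\ast$R) from $\Delta_1\vdash\varphi$, $\Delta_2\vdash\psi$ infer $\Delta_1\mathbin{,}\Delta_2\vdash\varphi\ast\psi$; ($\ast$L) from $\Delta(\varphi\mathbin{,}\psi)\vdash\chi$ infer $\Delta(\varphi\ast\psi)\vdash\chi$; ($-\!\ast$R) from $\Delta\mathbin{,}\varphi\vdash\psi$ infer $\Delta\vdash\varphi-\!\!\ast\,\psi$; ($-\!\ast$L) from $\Delta_1\vdash\varphi$, $\Delta(\Delta_2\mathbin{,}\psi)\vdash\chi$ infer $\Delta((\Delta_1\mathbin{,}\Delta_2)\mathbin{,}(\varphi-\!\!\ast\,\psi))\vdash\chi$; ($\top$R) $\varnothing_a\vdash\top$; ($\top$L) from $\Delta(\varnothing_a)\vdash\varphi$ infer $\Delta(\top)\vdash\varphi$; ($\wedge$R) from $\Delta_1\vdash\varphi$, $\Delta_2\vdash\psi$ infer $\Delta_1\mathbin{;}\Delta_2\vdash\varphi\wedge\psi$; ($\wedge$L)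 from $\Delta(\varphi\mathbin{;}\psi)\vdash\chi$ infer $\Delta(\varphi\wedge\psi)\vdash\chi$; ($\to$R) from $\Delta\mathbin{;}\varphi\vdash\psi$ infer $\Delta\vdash\varphi\to\psi$; ($\to$L) from $\Delta_1\vdash\varphi$, $\Delta(\Delta_2\mathbin{;}\psi)\vdash\chi$ infer $\Delta((\Delta_1\mathbin{;}\Delta_2)\mathbin{;}(\varphi\to\psi))\vdash\chi$; ($\bot$L) $\Delta(\bot)\vdash\varphi$; ($\vee$R1/2) from $\Delta\vdash\varphi$ (resp. $\Delta\vdash\psi$) infer $\Delta\vdash\varphi\vee\psi$; ($\vee$L) from $\Delta(\varphi)\vdash\chi$, $\Delta(\psi)\vdash\chi$ infer $\Delta(\varphi\vee\psi)\vdash\chi$. (No cut rule.) For a formula $\varphi$, the principal closed set is $[\![\varphi]\!]^{\mathrm{out}}=\{\Delta\in\mathrm{Bunch}\mid\Delta\vdash_{\mathsf{cf}}\varphi\}$. For $X\subseteq\mathrm{Bunch}$, $\mathrm{cl}(X)=\bigcap\{[\![\varphi]\!]^{\mathrm{out}}\mid X\subseteq[\![\varphi]\!]^{\mathrm{out}}\}$, and $\mathcal C=\{X\subseteq\mathrm{Bunch}\mid X=\mathrm{cl}(X)\}$. A formula regarded as an element of $\mathrm{Bunch}$ is the single-leaf bunch. *)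

From Stdlib Require Import Arith.

Definition atom := nat.

Inductive formula : Type :=
| FTop | FBot
| FAnd (p q : formula) | FOr (p q : formula) | FImp (p q : formula)
| FEmp | FStar (p q : formula) | FWand (p q : formula)
| FAtom (a : atom).

Inductive bunch : Type :=
| BForm (p : formula)
| BEmpM
| BEmpA
| BComma (d1 d2 : bunch)
| BSemi (d1 d2 : bunch).

Inductive bctx : Type :=
| Hole
| CCommaL (c : bctx) (d : bunch)
| CCommaR (d : bunch) (c : bctx)
| CSemiL (c : bctx) (d : bunch)
| CSemiR (d : bunch) (c : bctx).

Fixpoint fill (c : bctx) (g : bunch) : bunch :=
  match c with
  | Hole => g
  | CCommaL c d => BComma (fill c g) d
  | CCommaR d c => BComma d (fill c g)
  | CSemiL c d => BSemi (fill c g) d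
  | CSemiR d c => BSemi d (fill c g)
  end.

Inductive beq : bunch -> bunch -> Prop :=
| beq_refl d : beq d d
| beq_sym d e : beq d e -> beq e d
| beq_trans d e f : beq d e -> beq e f -> beq d f
| beq_comma_comm d e : beq (BComma d e) (BComma e d)
| beq_comma_assoc d e f : beq (BComma d (BComma e f)) (BComma (BComma d e) f)
| beq_comma_unit d : beq (BComma d BEmpM) d
| beq_semi_comm d e : beq (BSemi d e) (BSemi e d)
| beq_semi_assoc d e f : beq (BSemi d (BSemi e f)) (BSemi (BSemi d e) f)
| beq_semi_unit d : beq (BSemi d BEmpA) d
| beq_ctx c d e : beq d e -> beq (fill c d) (fill c e).

Fixpoint floor (d : bunch) : formula :=
  match d with
  | BForm p => p
  | BEmpM => FEmp
  | BEmpA => FTop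
  | BComma d1 d2 => FStar (floor d1) (floor d2)
  | BSemi d1 d2 => FAnd (floor d1) (floor d2)
  end.

Inductive cf : bunch -> formula -> Prop :=
| cf_ax a : cf (BForm (FAtom a)) (FAtom a)
| cf_equiv d d' p : cf d' p -> beq d d' -> cf d p
| cf_weak c d1 d2 p : cf (fill c d1) p -> cf (fill c (BSemi d1 d2)) p
| cf_contr c d1 p : cf (fill c (BSemi d1 d1)) p -> cf (fill c d1) p
| cf_empR : cf BEmpM FEmp
| cf_empL c p : cf (fill c BEmpM) p -> cf (fill c (BForm FEmp)) p
| cf_starR d1 d2 p q : cf d1 p -> cf d2 q -> cf (BComma d1 d2) (FStar p q)
| cf_starL c p q r : cf (fill c (BComma (BForm p) (BForm q))) r ->
    cf (fill c (BForm (FStar p q))) r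
| cf_wandR d p q : cf (BComma d (BForm p)) q -> cf d (FWand p q)
| cf_wandL c d1 d2 p q r : cf d1 p -> cf (fill c (BComma d2 (BForm q))) r ->
    cf (fill c (BComma (BComma d1 d2) (BForm (FWand p q)))) r
| cf_topR : cf BEmpA FTop
| cf_topL c p : cf (fill c BEmpA) p -> cf (fill c (BForm FTop)) p
| cf_andR d1 d2 p q : cf d1 p -> cf d2 q -> cf (BSemi d1 d2) (FAnd p q)
| cf_andL c p q r : cf (fill c (BSemi (BForm p) (BForm q))) r ->
    cf (fill c (BForm (FAnd p q))) r
| cf_impR d p q : cf (BSemi d (BForm p)) q -> cf d (FImp p q)
| cf_impL c d1 d2 p q r : cf d1 p -> cf (fill c (BSemi d2 (BForm q))) r ->
    cf (fill c (BSemi (BSemi d1 d2) (BForm (FImp p q)))) r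
| cf_botL c p : cf (fill c (BForm FBot)) p
| cf_orR1 d p q : cf d p -> cf d (FOr p q)
| cf_orR2 d p q : cf d q -> cf d (FOr p q)
| cf_orL c p q r : cf (fill c (BForm p)) r -> cf (fill c (BForm q)) r ->
    cf (fill c (BForm (FOr p q))) r.

Definition bset := bunch -> Prop.

Definition principal (p : formula) : bset := fun d => cf d p.

Definition cl (X : bset) : bset :=
  fun d => forall p : formula,
    (forall g, X g -> principal p g) -> principal p d.

Definition closedC (X : bset) : Prop := forall d, X d <-> cl X d.

(* A closed set is an intersection of principal sets [[φ]]^out, so each clause
   follows from the matching property of cut-free derivability at the root
   context: ⊥L, weakening and contraction give (1)-(3).  For (4), ⌊Δ⌋ is
   obtained from Δ by the left rules for ∗, ∧, emp and ⊤, and these rules are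
   invertible: unfolding leaves p ∗ q, p ∧ q, emp, ⊤ back into bunches can be
   pushed through any cut-free derivation. *)


(* Unfolding acts on any set of leaves in parallel, so that it survives
   contraction, which duplicates the leaf being unfolded. *)
Inductive unfold : bunch -> bunch -> Prop :=
| unfold_refl d : unfold d d
| unfold_star p q : unfold (BForm (FStar p q)) (BComma (BForm p) (BForm q))
| unfold_and p q : unfold (BForm (FAnd p q)) (BSemi (BForm p) (BForm q))
| unfold_emp : unfold (BForm FEmp) BEmpM
| unfold_top : unfold (BForm FTop) BEmpA
| unfold_comma a b a' b' : unfold a a' -> unfold b b' -> unfold (BComma a b) (BComma a' b')
| unfold_semi a b a' b' : unfold a a' -> unfold b b' -> unfold (BSemi a b) (BSemi a' b').

Lemma unfold_comma_inv a b x : unfold (BComma a b) x ->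
  exists a' b', x = BComma a' b' /\ unfold a a' /\ unfold b b'.
Proof. intro H; inversion H; subst; eauto 10 using unfold_refl. Qed.

Lemma unfold_semi_inv a b x : unfold (BSemi a b) x ->
  exists a' b', x = BSemi a' b' /\ unfold a a' /\ unfold b b'.
Proof. intro H; inversion H; subst; eauto 10 using unfold_refl. Qed.

Lemma unfold_empM_inv x : unfold BEmpM x -> x = BEmpM.
Proof. intro H; inversion H; reflexivity. Qed.

Lemma unfold_empA_inv x : unfold BEmpA x -> x = BEmpA.
Proof. intro H; inversion H; reflexivity. Qed.

Ltac invert_unfold :=
  repeat match goal with
  | H : unfold (BComma _ _) _ |- _ => apply unfold_comma_inv in H as (? & ? & -> & ? & ?)
  | H : unfold (BSemi _ _) _ |- _ => apply unfold_semi_inv in H as (? & ? & -> & ? & ?)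
  | H : unfold BEmpM _ |- _ => apply unfold_empM_inv in H as ->
  | H : unfold BEmpA _ |- _ => apply unfold_empA_inv in H as ->
  end.

Lemma unfold_fill c a b : unfold a b -> unfold (fill c a) (fill c b).
Proof. induction c; simpl; auto using unfold, unfold_refl. Qed.

Lemma unfold_fill_inv c d x : unfold (fill c d) x ->
  exists c' y, x = fill c' y /\ unfold d y /\
    (forall a b, unfold a b -> unfold (fill c a) (fill c' b)).
Proof.
  revert x; induction c; simpl; intros x H.
  - exists Hole, x; auto.
  - apply unfold_comma_inv in H as (a' & b' & -> & H1 & H2).
    destruct (IHc _ H1) as (c' & y & -> & Hy & Hc).
    exists (CCommaL c' b'), y; simpl; auto using unfold.
  - apply unfold_comma_inv in H as (a' & b' & -> & H1 & H2).
    destruct (IHc _ H2) as (c' & y & -> & Hy & Hc).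
    exists (CCommaR a' c'), y; simpl; auto using unfold.
  - apply unfold_semi_inv in H as (a' & b' & -> & H1 & H2).
    destruct (IHc _ H1) as (c' & y & -> & Hy & Hc).
    exists (CSemiL c' b'), y; simpl; auto using unfold.
  - apply unfold_semi_inv in H as (a' & b' & -> & H1 & H2).
    destruct (IHc _ H2) as (c' & y & -> & Hy & Hc).
    exists (CSemiR a' c'), y; simpl; auto using unfold.
Qed.

Definition unfold_sim (d e : bunch) : Prop :=
  forall d', unfold d d' -> exists e', unfold e e' /\ beq d' e'.

Lemma unfold_sim_trans d e f : unfold_sim d e -> unfold_sim e f -> unfold_sim d f.
Proof.
  intros Hde Hef d' Hd.
  destruct (Hde d' Hd) as (e' & He & Hde').
  destruct (Hef e' He) as (f' & Hf & Hef').
  eauto using beq.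
Qed.

Lemma unfold_sim_fill c d e : unfold_sim d e -> unfold_sim (fill c d) (fill c e).
Proof.
  intros Hde x Hx.
  apply unfold_fill_inv in Hx as (c' & y & -> & Hy & Hc).
  destruct (Hde y Hy) as (z & Hz & Hyz).
  exists (fill c' z); split; [apply Hc | apply beq_ctx]; assumption.
Qed.

Lemma beq_unfold_sim d e : beq d e -> unfold_sim d e /\ unfold_sim e d.
Proof.
  induction 1; try solve [split; intros z Hz; invert_unfold; eauto 7 using unfold, beq].
  - tauto.
  - split; [apply unfold_sim_trans with e | apply unfold_sim_trans with e]; tauto.
  - split; apply unfold_sim_fill; tauto.
Qed.

(* A left rule whose principal leaf gets unfolded is simply dropped: its premise
   already is the unfolded conclusion.  Every other rule is reapplied. *)
Lemma cf_unfold d p : cf d p -> forall e, unfold d e -> cf e p.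
Proof.
  induction 1; intros x Hx;
    try (apply unfold_fill_inv in Hx as (c' & y & -> & Hy & Hc)); invert_unfold.
  - inversion Hx; apply cf_ax.
  - destruct (proj1 (beq_unfold_sim _ _ ltac:(eassumption)) x Hx) as (e' & He & Hxe).
    apply cf_equiv with e'; auto.
  - apply cf_weak; auto.
  - apply cf_contr; auto using unfold.
  - apply cf_empR.
  - inversion Hy; subst; [apply cf_empL|]; auto using unfold_refl.
  - apply cf_starR; auto.
  - inversion Hy; subst; [apply cf_starL|]; auto using unfold_refl.
  - apply cf_wandR; auto using unfold, unfold_refl.
  - match goal with Hw : unfold (BForm (FWand _ _)) _ |- _ => inversion Hw; subst end.
    apply cf_wandL; auto using unfold, unfold_refl.
  - apply cf_topR.
  - inversion Hy; subst; [apply cf_topL|]; auto using unfold_refl.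
  - apply cf_andR; auto.
  - inversion Hy; subst; [apply cf_andL|]; auto using unfold_refl.
  - apply cf_impR; auto using unfold, unfold_refl.
  - match goal with Hi : unfold (BForm (FImp _ _)) _ |- _ => inversion Hi; subst end.
    apply cf_impL; auto using unfold, unfold_refl.
  - inversion Hy; apply cf_botL.
  - apply cf_orR1; auto.
  - apply cf_orR2; auto.
  - inversion Hy; subst; apply cf_orL; auto using unfold_refl.
Qed.

Lemma cf_starL_inv c p q r :
  cf (fill c (BForm (FStar p q))) r -> cf (fill c (BComma (BForm p) (BForm q))) r.
Proof. intro H; eapply cf_unfold; [exact H | apply unfold_fill, unfold_star]. Qed.

Lemma cf_andL_inv c p q r :
  cf (fill c (BForm (FAnd p q))) r -> cf (fill c (BSemi (BForm p) (BForm q))) r.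
Proof. intro H; eapply cf_unfold; [exact H | apply unfold_fill, unfold_and]. Qed.

Lemma cf_empL_inv c r : cf (fill c (BForm FEmp)) r -> cf (fill c BEmpM) r.
Proof. intro H; eapply cf_unfold; [exact H | apply unfold_fill, unfold_emp]. Qed.

Lemma cf_topL_inv c r : cf (fill c (BForm FTop)) r -> cf (fill c BEmpA) r.
Proof. intro H; eapply cf_unfold; [exact H | apply unfold_fill, unfold_top]. Qed.

Fixpoint ctx_comp (c c' : bctx) : bctx :=
  match c with
  | Hole => c'
  | CCommaL c d => CCommaL (ctx_comp c c') d
  | CCommaR d c => CCommaR d (ctx_comp c c')
  | CSemiL c d => CSemiL (ctx_comp c c') d
  | CSemiR d c => CSemiR d (ctx_comp c c')
  end.

Lemma fill_ctx_comp c c' g : fill (ctx_comp c c') g = fill c (fill c' g).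
Proof. induction c; simpl; congruence. Qed.

Lemma cf_fill_floor d c p : cf (fill c d) p -> cf (fill c (BForm (floor d))) p.
Proof.
  revert c; induction d as [q | | | d1 IH1 d2 IH2 | d1 IH1 d2 IH2]; simpl; intros c H.
  - exact H.
  - apply cf_empL, H.
  - apply cf_topL, H.
  - apply cf_starL.
    specialize (IH1 (ctx_comp c (CCommaL Hole d2))).
    specialize (IH2 (ctx_comp c (CCommaR (BForm (floor d1)) Hole))).
    rewrite !fill_ctx_comp in IH1, IH2; simpl in IH1, IH2; auto.
  - apply cf_andL.
    specialize (IH1 (ctx_comp c (CSemiL Hole d2))).
    specialize (IH2 (ctx_comp c (CSemiR (BForm (floor d1)) Hole))).
    rewrite !fill_ctx_comp in IH1, IH2; simpl in IH1, IH2; auto.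
Qed.

Lemma cf_fill_floor_inv d c p : cf (fill c (BForm (floor d))) p -> cf (fill c d) p.
Proof.
  revert c; induction d as [q | | | d1 IH1 d2 IH2 | d1 IH1 d2 IH2]; simpl; intros c H.
  - exact H.
  - apply cf_empL_inv, H.
  - apply cf_topL_inv, H.
  - apply cf_starL_inv in H.
    specialize (IH1 (ctx_comp c (CCommaL Hole (BForm (floor d2))))).
    specialize (IH2 (ctx_comp c (CCommaR d1 Hole))).
    rewrite !fill_ctx_comp in IH1, IH2; simpl in IH1, IH2; auto.
  - apply cf_andL_inv in H.
    specialize (IH1 (ctx_comp c (CSemiL Hole (BForm (floor d2))))).
    specialize (IH2 (ctx_comp c (CSemiR d1 Hole))).
    rewrite !fill_ctx_comp in IH1, IH2; simpl in IH1, IH2; auto.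
Qed.

Lemma closedC_intro (X : bset) d :
  closedC X -> (forall p, (forall g, X g -> cf g p) -> cf d p) -> X d.
Proof. intros HX Hd; apply HX; exact Hd. Qed.

Lemma closedC_cf_mono (X : bset) d e :
  closedC X -> (forall p, cf d p -> cf e p) -> X d -> X e.
Proof. intros HX Hde Hd; apply closedC_intro; auto. Qed.

Theorem proposition6p2 (X : bset) (HX : closedC X) :
  X (BForm FBot) /\
  (forall d d' : bunch, X d -> X (BSemi d d')) /\
  (forall d : bunch, X (BSemi d d) -> X d) /\
  (forall d : bunch, X d <-> X (BForm (floor d))).
Proof.
  split; [| split; [| split]].
  - apply closedC_intro; [exact HX |]; intros p _; exact (cf_botL Hole p).
  - intros d d'; apply closedC_cf_mono; [exact HX |]; intro p.
    exact (cf_weak Hole d d' p).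
  - intro d; apply closedC_cf_mono; [exact HX |]; intro p.
    exact (cf_contr Hole d p).
  - intro d; split; apply closedC_cf_mono; auto; intro p.
    + exact (cf_fill_floor d Hole p).
    + exact (cf_fill_floor_inv d Hole p).
Qed.
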